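(* Let $G$ be a connected edge-stable equimatchable graph with a cut vertex $v$. Then each connected component of $G-v$ is an edge-stable equimatchable graph.
   Context: All graphs are finite and simple. A graph is equimatchable if all its maximal matchings have the same cardinality; an equimatchable graph $G$ is edge-stable if $G\setminus e$ (delete edge $e$, keep vertices) is equimatchable for every $e\in E(G)$. A cut vertex of a connected graph is a vertex whose removal disconnects it. *)

From mathcomp Require Import all_boot.
Set Implicit Arguments. Unset Strict Implicit. Unset Printing Implicit Defensive.

(* A finite simple graph on vertex set S (a subset of a finType V) is given
   by an edge set E : {set {set V}}; each edge is a 2-element subset of S. *)
Section Graphs.
Variable V : finType.

Definition simple_graph (S : {set V}) (E : {set {set V}}) : Prop :=
  forall e, e \in E -> #|e| = 2 /\ e \subset S.

Definition adj (E : {set {set V}}) : rel V := fun x y => [set x; y] \in E.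

Definition connected_graph (S : {set V}) (E : {set {set V}}) : Prop :=
  forall x y, x \in S -> y \in S -> connect (adj E) x y.

Definition del_vertex_edges (E : {set {set V}}) (v : V) : {set {set V}} :=
  [set e in E | v \notin e].

Definition cut_vertex (S : {set V}) (E : {set {set V}}) (v : V) : Prop :=
  v \in S /\ ~ connected_graph (S :\ v) (del_vertex_edges E v).

Definition induced_edges (E : {set {set V}}) (C : {set V}) : {set {set V}} :=
  [set e in E | e \subset C].

Definition component (S : {set V}) (E : {set {set V}}) (x : V) : {set V} :=
  [set y in S | connect (adj E) x y].

Definition matching (E M : {set {set V}}) : Prop :=
  M \subset E /\ (forall e f, e \in M -> f \in M -> e != f -> [disjoint e & f]).

Definition maximal_matching (E M : {set {set V}}) : Prop :=
  matching E M /\ (forall e, e \in E -> e \notin M -> ~ matching E (e |: M)).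

Definition equimatchable (E : {set {set V}}) : Prop :=
  forall M1 M2, maximal_matching E M1 -> maximal_matching E M2 -> #|M1| = #|M2|.

Definition edge_stable (E : {set {set V}}) : Prop :=
  equimatchable E /\ (forall e, e \in E -> equimatchable (E :\ e)).

End Graphs.

From mathcomp Require Import all_boot.
Set Implicit Arguments. Unset Strict Implicit. Unset Printing Implicit Defensive.

(* Let C be a component of G - v. All edges between C and the rest of G pass
   through v, and v has a neighbour d outside C. Fix a maximal matching N of
   the edges avoiding C that contains vd. For any maximal matching M of G[C],
   M + N is a maximal matching of G: an edge g that could be added would
   either extend N, extend M, or meet C and v at once, but then it meets vd.
   Hence |M| = |M + N| - |N| does not depend on M, so G[C] is equimatchable.
   Removing an edge of G[C] preserves all of this, which gives edge-stability. *)

Section Matchings.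
Variable V : finType.
Implicit Types E M : {set {set V}}.

Definition matchingb E M : bool :=
  (M \subset E) && [forall e in M, forall f in M, (e != f) ==> [disjoint e & f]].

Lemma matchingP E M : reflect (matching E M) (matchingb E M).
Proof.
apply: (iffP andP) => [[sME /forall_inP dM]|[sME dM]]; split=> //.
  by move=> e f eM fM; move: (dM e eM) => /forall_inP /(_ f fM) /implyP.
by apply/forall_inP => e eM; apply/forall_inP => f fM; apply/implyP; apply: dM.
Qed.

Lemma matching_sub E E' M M' :
  matching E M -> M' \subset M -> M' \subset E' -> matching E' M'.
Proof. by move=> [_ dM] sM sE; split=> // e f /(subsetP sM) eM /(subsetP sM); apply: dM. Qed.

Lemma maximal_matching_exists E M0 :
  matching E M0 -> exists2 M, maximal_matching E M & M0 \subset M.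
Proof.
move=> /matchingP mM0; have [M /maxsetP [/matchingP mM maxM] sM0] := maxset_exists mM0.
exists M => //; split=> // g gE gM /matchingP mgM.
by move: gM; rewrite -(maxM _ mgM (subsetUr _ _)) setU11.
Qed.

End Matchings.

Definition outer_edges (V : finType) (E : {set {set V}}) (C : {set V}) :=
  [set f in E | [disjoint f & C]].

Section SeparatedPart.
Variables (V : finType) (E : {set {set V}}) (C : {set V}) (v d : V).
Hypothesis set0_notin_E : set0 \notin E.
Hypothesis crossing_edge_via_v :
  {in E, forall f : {set V}, ~~ [disjoint f & C] -> ~~ (f \subset C) -> v \in f}.
Hypothesis vd_in_E : [set v; d] \in E.
Hypothesis d_notin_C : d \notin C.
Hypothesis v_notin_C : v \notin C.

Lemma vd_outer : [set v; d] \in outer_edges E C.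
Proof.
rewrite inE vd_in_E disjoint_sym; apply/pred0P => y /=.
by rewrite !inE; apply/andP => -[yC /orP [] /eqP eyd]; move: yC;
   rewrite eyd ?(negbTE v_notin_C) ?(negbTE d_notin_C).
Qed.

Lemma matching_union M N :
  matching (induced_edges E C) M -> matching (outer_edges E C) N ->
  matching E (M :|: N) /\ #|M :|: N| = #|M| + #|N|.
Proof.
move=> [sM dM] [sN dN].
have inner f : f \in M -> f \in E /\ f \subset C.
  by move/(subsetP sM); rewrite inE => /andP.
have outer f : f \in N -> f \in E /\ [disjoint f & C].
  by move/(subsetP sN); rewrite inE => /andP.
have dMN f g : f \in M -> g \in N -> [disjoint f & g].
  move=> /inner [_ fC] /outer [_ gC].
  by apply: disjointWl fC _; rewrite disjoint_sym.
split.
  split.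
    by apply/subsetP => f; rewrite inE => /orP [/inner [] | /outer []].
  move=> e f; rewrite !inE => /orP [] eMN /orP [] fMN nef.
  - exact: dM.
  - exact: dMN.
  - by rewrite disjoint_sym; apply: dMN.
  - exact: dN.
rewrite cardsU; suff -> : M :&: N = set0 by rewrite cards0 subn0.
apply/setP => f; rewrite !inE; apply/andP => -[fM fN].
have := dMN f f fM fN; rewrite -setI_eq0 setIid => /eqP f0.
by have [fE _] := inner f fM; move: set0_notin_E; rewrite -f0 fE.
Qed.

Lemma maximal_matching_union M N :
  maximal_matching (induced_edges E C) M -> maximal_matching (outer_edges E C) N ->
  [set v; d] \in N -> maximal_matching E (M :|: N).
Proof.
move=> [mM maxM] [mN maxN] vdN; have [mMN _] := matching_union mM mN.
split=> // g gE gMN mg.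
have extend (P E' : {set {set V}}) :
    P \subset M :|: N -> P \subset E' -> g \in E' -> matching E' (g |: P).
  by move=> sP sPE' gE'; apply: matching_sub mg (setUS _ sP) _; rewrite subUset sub1set gE'.
have [gdC|ngdC] := boolP [disjoint g & C].
  have gO : g \in outer_edges E C by rewrite inE gE.
  apply: (maxN g gO); first by apply: contra gMN; rewrite inE orbC => ->.
  by apply: extend gO; [exact: subsetUr | case: mN].
have [gsC|ngsC] := boolP (g \subset C).
  have gI : g \in induced_edges E C by rewrite inE gE.
  apply: (maxM g gI); first by apply: contra gMN; rewrite inE => ->.
  by apply: extend gI; [exact: subsetUl | case: mM].
have vg := crossing_edge_via_v gE ngdC ngsC.
have ngvd : g != [set v; d] by apply: contraNneq gMN => ->; rewrite inE vdN orbT.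
have [_ dg] := mg.
have vdMN : [set v; d] \in g |: (M :|: N) by rewrite setU1r // inE vdN orbT.
move/pred0P/(_ v): (dg g [set v; d] (setU11 _ _) vdMN ngvd).
by rewrite /= vg !inE eqxx.
Qed.

Lemma equimatchable_induced : equimatchable E -> equimatchable (induced_edges E C).
Proof.
move=> eqE M1 M2 maxM1 maxM2.
have [N maxN] : exists2 N, maximal_matching (outer_edges E C) N & [set [set v; d]] \subset N.
  apply: maximal_matching_exists; split; first by rewrite sub1set vd_outer.
  by move=> e f; rewrite !inE => /eqP -> /eqP ->; rewrite eqxx.
rewrite sub1set => vdN.
have [_ cardM1] := matching_union maxM1.1 maxN.1.
have [_ cardM2] := matching_union maxM2.1 maxN.1.
apply/eqP; rewrite -(eqn_add2r #|N|) -cardM1 -cardM2; apply/eqP.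
by apply: eqE; apply: maximal_matching_union.
Qed.

End SeparatedPart.

Lemma adj_sym (V : finType) (E : {set {set V}}) : symmetric (adj E).
Proof. by move=> a b; rewrite /adj setUC. Qed.

Lemma simple_graph_set0 (V : finType) (S : {set V}) (E : {set {set V}}) :
  simple_graph S E -> set0 \notin E.
Proof. by move=> simpleE; apply/negP => /simpleE []; rewrite cards0. Qed.

Section CutVertexComponent.
Variables (V : finType) (S : {set V}) (E : {set {set V}}) (v x : V).
Hypothesis simpleE : simple_graph S E.
Let C := component (S :\ v) (del_vertex_edges E v) x.

Lemma component_notin : v \notin C.
Proof. by rewrite !inE eqxx. Qed.

Lemma component_adj a b : a \in C -> b != v -> [set a; b] \in E -> b \in C.
Proof.
rewrite inE => /andP [aSv xa] bv abE.
have bS : b \in S by have [_ /subsetP] := simpleE abE; apply; rewrite !inE eqxx orbT.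
have [av _] := setD1P aSv.
rewrite !inE bv bS; apply: connect_trans xa (connect1 _).
by rewrite /adj inE abE !inE negb_or eq_sym av eq_sym bv.
Qed.

Lemma crossing_edge_via_cut :
  {in E, forall f : {set V}, ~~ [disjoint f & C] -> ~~ (f \subset C) -> v \in f}.
Proof.
move=> f fE; rewrite -setI_eq0 => /set0Pn [a /setIP [af aC]] /subsetPn [b bf bC].
have ab : a != b by apply: contraNneq bC => <-.
apply: contraNT bC => vf.
have bv : b != v by apply: contraNneq vf => <-.
apply: (component_adj aC bv); suff <- : f = [set a; b] by [].
apply/esym/eqP; rewrite eqEcard; have [-> _] := simpleE fE; rewrite cards2 ab andbT.
by apply/subsetP => u; rewrite !inE => /orP [] /eqP ->.
Qed.

(* If v had no neighbour outside C, then C together with v would be closed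
   under adjacency, hence would contain all of S. *)
Lemma cut_vertex_outer_neighbor :
  x \in S :\ v -> connected_graph S E -> cut_vertex S E v ->
  exists2 d, [set v; d] \in E & d \notin C.
Proof.
move=> x_in_Sv connE [_ disconnected].
have [d /andP [vdE dC] | inner] := pickP [pred d | ([set v; d] \in E) && (d \notin C)].
  by exists d.
have closedCv : closed (adj E) (v |: C).
  apply: intro_closed; first exact: sym_connect_sym (@adj_sym V E).
  move=> a b ab; rewrite !in_setU1 => /orP [/eqP av | aC].
    have := inner b; rewrite /= -av (ab : [set a; b] \in E) => /negbFE ->.
    by rewrite orbT.
  by have [->|bv] := eqVneq b v; rewrite ?eqxx //= (component_adj aC bv ab).
have C_full w : w \in S :\ v -> w \in C.
  move=> wSv; have [wv wS] := setD1P wSv; have [_ xS] := setD1P x_in_Sv.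
  have xC : x \in C by rewrite inE x_in_Sv connect0.
  have := closed_connect closedCv (connE x w xS wS).
  by rewrite !in_setU1 xC (negbTE wv) orbT /= => <-.
case: disconnected => y z /C_full yC /C_full zC.
have symE0 := sym_connect_sym (@adj_sym V (del_vertex_edges E v)).
move: yC zC; rewrite !inE => /andP [_ xy] /andP [_ xz].
by apply: connect_trans xz; rewrite symE0.
Qed.

End CutVertexComponent.

Theorem lemma4p2 (V : finType) (S : {set V}) (E : {set {set V}}) (v : V) :
  simple_graph S E ->
  connected_graph S E ->
  edge_stable E ->
  cut_vertex S E v ->
  forall x, x \in S :\ v ->
    let C := component (S :\ v) (del_vertex_edges E v) x in
    edge_stable (induced_edges E C).
Proof.
move=> simpleE connE [eqE stableE] cutv x x_in_Sv C.
have [d vdE dC] := cut_vertex_outer_neighbor simpleE x_in_Sv connE cutv.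
have vC : v \notin C := component_notin S E v x.
have crossing := crossing_edge_via_cut (v := v) (x := x) simpleE.
have set0E := simple_graph_set0 simpleE.
split; first exact: equimatchable_induced set0E crossing vdE dC vC eqE.
move=> e /setIdP [eE eC].
have -> : induced_edges E C :\ e = induced_edges (E :\ e) C.
  by apply/setP => f; rewrite !inE andbA.
apply: (equimatchable_induced (v := v) (d := d)) => //.
- by apply: contra set0E => /setD1P [].
- by move=> f /setD1P [_ fE]; apply: crossing.
- rewrite !inE vdE andbT; apply: contraNneq dC => vde.
  by apply: (subsetP eC); rewrite -vde !inE eqxx orbT.
- exact: stableE.
Qed.
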